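(* Let $\Lambda$ be a unital commutative ring and $q$ a non-negative integer. A Lie algebra $\mathfrak g$ over $\Lambda$ is $q$-capable if and only if $\mathfrak g\cong\operatorname{IDer}(\mathfrak m,q)$ for some Lie algebra $\mathfrak m$ over $\Lambda$.
   Context: $Z_q(\mathfrak m)=\{e\in Z(\mathfrak m)\mid qe=0\}$, where $Z(\mathfrak m)$ is the center of $\mathfrak m$. A Lie algebra $\mathfrak g$ is $q$-capable if $\mathfrak g\cong\mathfrak m/Z_q(\mathfrak m)$ for some Lie algebra $\mathfrak m$. For a Lie algebra $\mathfrak m$, $\operatorname{Der}(\mathfrak m)$ is the Lie algebra of derivations (bracket $[d,d']=dd'-d'd$), $d_m$ is the inner derivation $m'\mapsto[m,m']$, $\operatorname{Der}(\mathfrak m)\times q\mathfrak m$ is the Lie algebra with bracket $[(d,qm),(d',qm')]=([d,d'],q[m,m'])$, and $\operatorname{IDer}(\mathfrak m,q)=\{(d_m,qm)\mid m\in\mathfrak m\}$ is its Lie subalgebra of inner $q$-derivations. *)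

From HB Require Import structures.
From mathcomp Require Import all_boot all_algebra.
Set Implicit Arguments. Unset Strict Implicit. Unset Printing Implicit Defensive.
Import GRing.Theory.
Local Open Scope ring_scope.

Record lieAlgebra (R : comPzRingType) := LieAlgebra {
  lie_carrier :> lmodType R;
  lie_br : lie_carrier -> lie_carrier -> lie_carrier;
  lie_br_linl : forall (a : R) (x y z : lie_carrier),
      lie_br (a *: x + y) z = a *: lie_br x z + lie_br y z;
  lie_br_linr : forall (a : R) (x y z : lie_carrier),
      lie_br x (a *: y + z) = a *: lie_br x y + lie_br x z;
  lie_br_alt : forall x : lie_carrier, lie_br x x = 0;
  lie_br_jacobi : forall x y z : lie_carrier,
      lie_br x (lie_br y z) + lie_br y (lie_br z x) + lie_br z (lie_br x y) = 0
}.
Arguments lie_br {R l}.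

Definition Zq (R : comPzRingType) (m : lieAlgebra R) (q : nat) (e : m) : Prop :=
  (forall x : m, lie_br e x = 0) /\ e *+ q = 0.

Definition lie_hom (R : comPzRingType) (m g : lieAlgebra R) (f : m -> g) : Prop :=
  (forall (a : R) (x y : m), f (a *: x + y) = a *: f x + f y) /\
  (forall x y : m, f (lie_br x y) = lie_br (f x) (f y)).

(* g is q-capable: g ≅ m / Z_q(m) for some Lie algebra m, i.e. (first
   isomorphism theorem form) there is a surjective Lie homomorphism
   m -> g whose kernel is exactly Z_q(m). *)
Definition q_capable (R : comPzRingType) (q : nat) (g : lieAlgebra R) : Prop :=
  exists (m : lieAlgebra R) (f : m -> g),
    lie_hom f /\ (forall y : g, exists x : m, f x = y) /\
    (forall x : m, f x = 0 <-> Zq q x).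

Definition inner_der (R : comPzRingType) (m : lieAlgebra R) (x : m) : m -> m :=
  fun y => lie_br x y.

(* g ≅ IDer(m,q): a bijection phi from g onto
   IDer(m,q) = { (d_x, q x) | x in m } ⊆ Der(m) × q m   (elements of the
   ambient Der(m) × q m are represented as pairs in (m -> m) * m),
   which is R-linear for the pointwise module structure and carries the
   bracket of g to the bracket [(d,qx),(d',qx')] = ([d,d'], q[x,x']) with
   [d,d'] = d d' - d' d. *)
Definition iso_IDer (R : comPzRingType) (q : nat) (g m : lieAlgebra R)
    (phi : g -> ((m -> m) * m)%type) : Prop :=
  injective phi /\
  (forall u : ((m -> m) * m)%type,
      (exists x : g, phi x = u) <-> (exists y : m, u = (inner_der y, y *+ q))) /\
  (forall (a : R) (x y : g),
      phi (a *: x + y) =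
        ((fun z => a *: (phi x).1 z + (phi y).1 z), a *: (phi x).2 + (phi y).2)) /\
  (forall (x y : g) (m1 m2 : m),
      phi x = (inner_der m1, m1 *+ q) -> phi y = (inner_der m2, m2 *+ q) ->
      phi (lie_br x y) =
        ((fun z => (phi x).1 ((phi y).1 z) - (phi y).1 ((phi x).1 z)),
         (lie_br m1 m2) *+ q)).

Definition isomorphic_IDer (R : comPzRingType) (q : nat) (g m : lieAlgebra R) : Prop :=
  exists phi : g -> ((m -> m) * m)%type, iso_IDer q phi.

(* The map x |-> (d_x, q x) from m to Der(m) x q m is linear, carries the
   bracket of m to the bracket of Der(m) x q m, has image IDer(m,q) and
   identifies exactly the elements congruent modulo Z_q(m).  Hence
   m / Z_q(m) and IDer(m,q) are isomorphic, which gives both directions. *)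

From mathcomp Require Import all_boot all_algebra.
From Stdlib Require Import FunctionalExtensionality IndefiniteDescription.
Set Implicit Arguments. Unset Strict Implicit. Unset Printing Implicit Defensive.
Import GRing.Theory.
Local Open Scope ring_scope.

Section LieBracket.
Variables (R : comPzRingType) (L : lieAlgebra R).
Implicit Types (x y z : L) (a : R).

Lemma lie_brDl x y z : lie_br (x + y) z = lie_br x z + lie_br y z.
Proof. by have := lie_br_linl 1 x y z; rewrite !scale1r. Qed.

Lemma lie_brDr x y z : lie_br z (x + y) = lie_br z x + lie_br z y.
Proof. by have := lie_br_linr 1 z x y; rewrite !scale1r. Qed.

Lemma lie_br0l z : lie_br (0 : L) z = 0.
Proof. by apply: (@addrI _ (lie_br 0 z)); rewrite -lie_brDl !addr0. Qed.

Lemma lie_br0r z : lie_br z (0 : L) = 0.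
Proof. by apply: (@addrI _ (lie_br z 0)); rewrite -lie_brDr !addr0. Qed.

Lemma lie_brZl a x z : lie_br (a *: x) z = a *: lie_br x z.
Proof. by rewrite -[a *: x]addr0 lie_br_linl lie_br0l addr0. Qed.

Lemma lie_brZr a x z : lie_br z (a *: x) = a *: lie_br z x.
Proof. by rewrite -[a *: x]addr0 lie_br_linr lie_br0r addr0. Qed.

Lemma lie_brNl x z : lie_br (- x) z = - lie_br x z.
Proof. by rewrite -scaleN1r lie_brZl scaleN1r. Qed.

Lemma lie_brNr x z : lie_br z (- x) = - lie_br z x.
Proof. by rewrite -scaleN1r lie_brZr scaleN1r. Qed.

Lemma lie_brBl x y z : lie_br (x - y) z = lie_br x z - lie_br y z.
Proof. by rewrite lie_brDl lie_brNl. Qed.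

Lemma lie_brMnl x z n : lie_br (x *+ n) z = lie_br x z *+ n.
Proof. by elim: n => [|n IHn]; rewrite ?lie_br0l // !mulrS lie_brDl IHn. Qed.

Lemma lie_brMnr x z n : lie_br z (x *+ n) = lie_br z x *+ n.
Proof. by elim: n => [|n IHn]; rewrite ?lie_br0r // !mulrS lie_brDr IHn. Qed.

Lemma lie_br_anti x y : lie_br x y = - lie_br y x.
Proof.
have := lie_br_alt (x + y).
rewrite lie_brDl !lie_brDr !lie_br_alt add0r addr0 => /eqP.
by rewrite addr_eq0 => /eqP.
Qed.

Lemma inner_der_br x y :
  inner_der (lie_br x y) =
  (fun z => inner_der x (inner_der y z) - inner_der y (inner_der x z)).
Proof.
apply: functional_extensionality => z; rewrite /inner_der lie_br_anti.
have jacobi := lie_br_jacobi x y z.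
have -> : lie_br z (lie_br x y) =
          - (lie_br x (lie_br y z) + lie_br y (lie_br z x)).
  by apply/eqP; rewrite -addr_eq0 addrC jacobi.
by rewrite opprK (lie_br_anti z x) lie_brNr.
Qed.

End LieBracket.

Lemma lie_homB (R : comPzRingType) (m g : lieAlgebra R) (f : m -> g) x y :
  lie_hom f -> f (x - y) = f x - f y.
Proof. by case=> f_lin _; rewrite addrC -scaleN1r f_lin scaleN1r addrC. Qed.

Definition ider (R : comPzRingType) (m : lieAlgebra R) (q : nat) (x : m) :
  ((m -> m) * m)%type := (inner_der x, x *+ q).

Section InnerQDerivation.
Variables (R : comPzRingType) (m : lieAlgebra R) (q : nat).
Implicit Types (x y : m) (a : R).

Lemma ider_eq x y : ider q x = ider q y <-> Zq q (x - y).
Proof.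
split.
- case=> Ed Eq; split; last by rewrite mulrnBl Eq subrr.
  by move=> z; rewrite lie_brBl -[lie_br x z]/(inner_der x z) Ed subrr.
- case=> Zd Zn; congr (_, _); last by apply/eqP; rewrite -subr_eq0 -mulrnBl Zn.
  apply: functional_extensionality => z; apply/eqP.
  by rewrite -subr_eq0 /inner_der -lie_brBl Zd.
Qed.

Lemma ider0 : ider q (0 : m) = ((fun _ => 0), 0).
Proof.
rewrite /ider mul0rn; congr (_, _).
by apply: functional_extensionality => z; exact: lie_br0l.
Qed.

Lemma iderD a x y :
  ider q (a *: x + y) =
  ((fun z => a *: (ider q x).1 z + (ider q y).1 z),
   a *: (ider q x).2 + (ider q y).2).
Proof.
rewrite /ider mulrnDl scalerMnr; congr (_, _).
by apply: functional_extensionality => z; rewrite /inner_der lie_br_linl.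
Qed.

Lemma ider_br x y :
  ider q (lie_br x y) =
  ((fun z => (ider q x).1 ((ider q y).1 z) - (ider q y).1 ((ider q x).1 z)),
   lie_br x y *+ q).
Proof. by rewrite /ider inner_der_br. Qed.

Lemma lie_brMn_congr x x' y y' :
  x *+ q = x' *+ q -> y *+ q = y' *+ q -> lie_br x y *+ q = lie_br x' y' *+ q.
Proof. by move=> Ex Ey; rewrite -lie_brMnl Ex lie_brMnl -!lie_brMnr Ey. Qed.

End InnerQDerivation.

Lemma lie_hom_ider_eq (R : comPzRingType) (q : nat) (m g : lieAlgebra R)
    (f : m -> g) x y :
  lie_hom f -> (forall x, f x = 0 <-> Zq q x) ->
  f x = f y <-> ider q x = ider q y.
Proof.
move=> f_hom f_ker; rewrite ider_eq -f_ker lie_homB //.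
by split=> [-> | /eqP]; rewrite ?subrr // subr_eq0 => /eqP.
Qed.

Lemma q_capable_isomorphic_IDer (R : comPzRingType) (q : nat) (g : lieAlgebra R) :
  q_capable q g -> exists m : lieAlgebra R, isomorphic_IDer q g m.
Proof.
case=> m [f [f_hom [f_surj f_ker]]].
have [pre preK] := functional_choice _ f_surj.
have f_ider x y : f x = f y <-> ider q x = ider q y := lie_hom_ider_eq _ _ f_hom f_ker.
have [f_lin f_br] := f_hom.
exists m, (fun y => ider q (pre y)); split; [|split; [|split]].
- by move=> y y' /f_ider; rewrite !preK.
- move=> u; split=> [[y <-] | [x ->]]; first by exists (pre y).
  by exists (f x); apply/f_ider; rewrite preK.
- by move=> a x y; rewrite -iderD; apply/f_ider; rewrite f_lin !preK.
- move=> x y m1 m2 [_ Ex] [_ Ey].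
  have -> : ider q (pre (lie_br x y)) = ider q (lie_br (pre x) (pre y)).
    by apply/f_ider; rewrite f_br !preK.
  by rewrite ider_br (lie_brMn_congr Ex Ey).
Qed.

Lemma isomorphic_IDer_q_capable (R : comPzRingType) (q : nat) (g m : lieAlgebra R) :
  isomorphic_IDer q g m -> q_capable q g.
Proof.
case=> phi [phi_inj [phi_img [phi_lin phi_br]]].
have phi_onto x : exists y, phi y = ider q x by apply/phi_img; exists x.
have [f fP] := functional_choice _ phi_onto.
have phi0 : phi 0 = ider q 0.
  rewrite ider0 -[0 in LHS](addNr 0) -scaleN1r phi_lin scaleN1r addNr.
  by congr (_, _); apply: functional_extensionality => z; rewrite scaleN1r addNr.
exists m, f; split; [split|split].
- by move=> a x y; apply: phi_inj; rewrite phi_lin !fP iderD.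
- by move=> x y; apply: phi_inj; rewrite (phi_br _ _ _ _ (fP x) (fP y)) fP ider_br !fP.
- move=> y; have [x Ex] : exists x, phi y = ider q x by apply/phi_img; exists y.
  by exists x; apply: phi_inj; rewrite fP Ex.
- move=> x; have := ider_eq q x 0; rewrite subr0 => <-; rewrite -phi0 -fP.
  by split=> [-> | /phi_inj].
Qed.

Theorem corollary4p3 (R : comPzRingType) (q : nat) (g : lieAlgebra R) :
  q_capable q g <-> exists m : lieAlgebra R, isomorphic_IDer q g m.
Proof.
split; first exact: q_capable_isomorphic_IDer.
by case=> m; exact: isomorphic_IDer_q_capable.
Qed.
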